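(* Let $n\geq 5$. Let $S_n^+$ be any graph obtained from the star $S_n$ on $n$ vertices by adding one new edge (joining two leaves), and let $S_n^{++}$ be any graph obtained from $S_n^+$ by adding one further new edge (joining two nonadjacent vertices of $S_n^+$). Then $px_k(S_n^{++})\leq n-3$ for each integer $k$ with $3\leq k\leq n$.
   Context: All graphs are finite, simple, undirected and connected. An edge-coloring of a graph assigns a color to each edge (adjacent edges may receive the same color). A tree in an edge-colored graph is proper if any two adjacent edges of the tree receive different colors. For $S\subseteq V(G)$, an $S$-tree is a subgraph of $G$ that is a tree containing all vertices of $S$. For a connected graph $G$ of order $n$ and an integer $k$ with $2\le k\le n$, an edge-coloring of $G$ is a $k$-proper coloring if for every set $S$ of $k$ vertices of $G$ there exists a proper $S$-tree in $G$. The $k$-proper index $px_k(G)$ is the minimum number of colors used in a $k$-proper coloring of $G$. The star $S_n$ is the tree $K_{1,n-1}$ on $n$ vertices. *)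

From mathcomp Require Import all_boot.
Set Implicit Arguments. Unset Strict Implicit. Unset Printing Implicit Defensive.

(* A simple graph on a finite type T is a symmetric irreflexive relation e. *)

Definition is_tree_in (T : finType) (e : rel T) (V : {set T}) (t : rel T) : Prop :=
  (forall u v, t u v -> e u v) /\
  (forall u v, t u v -> t v u) /\
  (forall u v, t u v -> u \in V /\ v \in V) /\
  (exists v, v \in V) /\
  (forall u v, u \in V -> v \in V -> connect t u v) /\
  (forall s : seq T, uniq s -> 3 <= size s -> ~~ cycle t s).

Definition is_S_tree (T : finType) (e : rel T) (S V : {set T}) (t : rel T) : Prop :=
  is_tree_in e V t /\ S \subset V.

Definition edge_coloring (T : finType) (C : Type) (e : rel T) (col : T -> T -> C) : Prop :=
  forall u v, e u v -> col u v = col v u.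

Definition proper_tree (T : finType) (C : eqType) (t : rel T) (col : T -> T -> C) : Prop :=
  forall u v w, t u v -> t u w -> v != w -> col u v != col u w.

Definition k_proper_coloring (T : finType) (C : eqType) (e : rel T) (k : nat)
    (col : T -> T -> C) : Prop :=
  edge_coloring e col /\
  forall S : {set T}, #|S| = k ->
    exists (V : {set T}) (t : rel T), is_S_tree e S V t /\ proper_tree t col.

(* px_k(G) <= m : there is a k-proper coloring using at most m colors
   (colors taken from 'I_m). *)
Definition px_le (T : finType) (e : rel T) (k m : nat) : Prop :=
  exists col : T -> T -> 'I_m, k_proper_coloring e k col.

Definition star (n : nat) (c : 'I_n) : rel 'I_n :=
  fun u v => (u != v) && ((u == c) || (v == c)).

Definition add_edge (T : finType) (e : rel T) (a b : T) : rel T :=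
  fun u v => e u v || ((u != v) && ([set u; v] == [set a; b])).

From mathcomp Require Import all_boot zify.

Set Implicit Arguments.
Unset Strict Implicit.
Unset Printing Implicit Defensive.

(* Each extra edge lets one leaf of the star hang below another vertex instead
   of below the centre c.  With two extra edges this yields a spanning tree in
   which c has only n - 3 children and every other vertex has at most one
   child; properly edge-colouring that tree with n - 3 colours is easy, and a
   proper spanning tree contains every vertex set S, whatever its size k. *)

Lemma next_neq_prev (T : eqType) (s : seq T) x :
  uniq s -> 2 < size s -> x \in s -> next s x != prev s x.
Proof.
move=> s_uniq s_big /rot_to[i s' def_s].
rewrite -(next_rot i s_uniq) -(prev_rot i s_uniq).
move: s_uniq s_big; rewrite -(rot_uniq i) -(size_rot i) def_s.
case: s' {def_s} => [|y s'] //; case/lastP: s' => [|q z] //.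
rewrite cons_uniq inE negb_or eq_sym => /and3P[/andP[/negbTE yx xN] yN _] _.
rewrite next_nth prev_nth mem_head /= eqxx memNindex //= yx size_rcons.
rewrite [nth _ _ _]/= nth_rcons ltnn eqxx.
by apply: contraNneq yN => ->; rewrite mem_rcons mem_head.
Qed.

Lemma exists_rank_in (T : finType) (A : {pred T}) (x0 : T) n :
  x0 \in A -> #|A| = n -> exists rk : T -> 'I_n, {in A &, injective rk}.
Proof. by move=> x0A <-; exists (enum_rank_in x0A); apply: enum_rank_in_inj. Qed.

Lemma neq_eqF (T : eqType) (x y : T) :
  x != y -> ((x == y) = false) * ((y == x) = false).
Proof. by move=> /negbTE xy; rewrite [y == x]eq_sym xy. Qed.

Definition ord_other m (i : 'I_m.+2) : 'I_m.+2 := if i == ord0 then ord_max else ord0.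

Lemma ord_other_neq m (i : 'I_m.+2) : ord_other i != i.
Proof. by rewrite /ord_other; case: (eqVneq i ord0) => [->|]; rewrite // eq_sym. Qed.

Section ParentTree.

Variables (T : finType) (e : rel T) (r : T) (p : T -> T) (d : T -> nat).
Hypothesis e_sym : symmetric e.
Hypothesis e_parent : forall u, u != r -> e u (p u).
Hypothesis depth_parent : forall u, u != r -> d u = (d (p u)).+1.

Definition parent_tree : rel T :=
  fun u v => ((u != r) && (v == p u)) || ((v != r) && (u == p v)).

(* The lower endpoint of a tree edge; [r] for pairs that are not tree edges. *)
Definition edge_child u v : T :=
  if (u != r) && (v == p u) then u else if (v != r) && (u == p v) then v else r.

Definition parent_coloring (C : Type) (g : T -> C) u v : C := g (edge_child u v).

Lemma parent_parent_neq u : u != r -> p u != r -> p (p u) != u.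
Proof.
move=> ur pur; apply/eqP => ppu.
by have := depth_parent pur; rewrite ppu (depth_parent ur); lia.
Qed.

Lemma parent_tree_sym : symmetric parent_tree.
Proof. by move=> u v; rewrite /parent_tree orbC. Qed.

Lemma edge_childC u v : edge_child u v = edge_child v u.
Proof.
rewrite /edge_child; case: (boolP (_ && _)) => [/andP[ur /eqP ->]|_] /=; last by case: ifP.
have [-> //|pur] := eqVneq (p u) r.
by rewrite eq_sym (negbTE (parent_parent_neq ur pur)).
Qed.

Lemma edge_child_parent u : u != r -> edge_child u (p u) = u.
Proof. by move=> ur; rewrite /edge_child ur eqxx. Qed.

Lemma edge_child_child u : u != r -> edge_child (p u) u = u.
Proof. by move=> ur; rewrite edge_childC edge_child_parent. Qed.

Lemma parent_tree_deepest u v : parent_tree u v -> d v <= d u -> v = p u.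
Proof.
case/orP=> [/andP[_ /eqP //]|/andP[vr /eqP ->]].
by rewrite (depth_parent vr) ltnn.
Qed.

Lemma connect_parent_tree_root u : connect parent_tree u r.
Proof.
elim: {u}(d u).+1 {-2}u (ltnSn (d u)) => // N IH u du.
have [-> //|ur] := eqVneq u r.
apply: connect_trans (IH (p u) _); last by rewrite -ltnS -depth_parent.
by apply: connect1; rewrite /parent_tree ur eqxx.
Qed.

Lemma parent_tree_acyclic (s : seq T) :
  uniq s -> 2 < size s -> ~~ cycle parent_tree s.
Proof.
move=> s_uniq s_big; apply/negP => s_cycle.
have [x0 x0s] : {x0 | x0 \in s}.
  by case: s s_big {s_uniq s_cycle} => // x0 s _; exists x0; apply: mem_head.
case: (@arg_maxnP _ _ (fun z => z \in s) d x0s) => x xs x_deepest.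
have next_x : next s x = p x.
  apply: parent_tree_deepest (next_cycle s_cycle xs) _.
  by apply: x_deepest; rewrite mem_next.
have prev_x : prev s x = p x.
  apply: parent_tree_deepest _ (x_deepest _ _); last by rewrite mem_prev.
  by rewrite parent_tree_sym; apply: prev_cycle.
by move: (next_neq_prev s_uniq s_big xs); rewrite next_x prev_x eqxx.
Qed.

Lemma parent_tree_spanning : is_tree_in e setT parent_tree.
Proof.
split.
  move=> u v /orP[/andP[ur /eqP ->] | /andP[vr /eqP ->]]; first exact: e_parent.
  by rewrite e_sym; apply: e_parent.
split; first by move=> u v; rewrite parent_tree_sym.
split; first by move=> u v _; rewrite !in_setT.
split; first by exists r; rewrite in_setT.
split; last by move=> s s_uniq s_big; apply: parent_tree_acyclic.
move=> u v _ _; apply: connect_trans (connect_parent_tree_root u) _.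
by rewrite (sym_connect_sym parent_tree_sym) connect_parent_tree_root.
Qed.

Lemma parent_tree_k_proper (C : eqType) (g : T -> C) k :
  (forall u v, u != r -> v != r -> p u = p v -> u != v -> g u != g v) ->
  (forall u, u != r -> p u != r -> g u != g (p u)) ->
  k_proper_coloring e k (parent_coloring g).
Proof.
move=> g_siblings g_parent.
split=> [u v _|S _]; first by rewrite /parent_coloring edge_childC.
exists setT, parent_tree.
split; first by split; [exact: parent_tree_spanning | exact: subsetT].
rewrite /parent_coloring => u v w.
case/orP=> [/andP[ur /eqP ->]|/andP[vr /eqP uv]];
  case/orP=> [/andP[ur' /eqP ->]|/andP[wr /eqP uw]].
- by rewrite eqxx.
- move=> _; subst u; rewrite edge_child_parent // edge_child_child // eq_sym.
  exact: g_parent.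
- move=> _; subst u; rewrite edge_child_child // edge_child_parent //.
  exact: g_parent.
- subst u; rewrite edge_child_child // uw edge_child_child //.
  exact: g_siblings.
Qed.

End ParentTree.

Section TwoDetours.

Variables (m : nat) (T : finType) (e : rel T) (r u1 q1 u2 q2 : T).
Hypotheses (u1_r : u1 != r) (u2_r : u2 != r) (u2_u1 : u2 != u1).
Hypotheses (q1_r : q1 != r) (q1_u1 : q1 != u1) (q1_u2 : q1 != u2).
Hypotheses (q2_r : q2 != r) (q2_u2 : q2 != u2) (q2_q1 : q2 != q1).

Let detour_neqF := (neq_eqF u1_r, neq_eqF u2_r, neq_eqF u2_u1, neq_eqF q1_r,
  neq_eqF q1_u1, neq_eqF q1_u2, neq_eqF q2_r, neq_eqF q2_u2, neq_eqF q2_q1).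

(* u1 hangs below q1, a child of r; u2 hangs below q2, which is either u1 or
   a child of r other than q1; every other vertex is a child of r. *)
Definition detour_parent v := if v == u1 then q1 else if v == u2 then q2 else r.

Definition detour_depth v :=
  let depth1 w := if w == r then 0 else if w == u1 then 2 else 1 in
  if v == u2 then (depth1 q2).+1 else depth1 v.

Lemma detour_depth_parent v :
  v != r -> detour_depth v = (detour_depth (detour_parent v)).+1.
Proof.
rewrite /detour_depth /detour_parent /= => /negbTE ->.
case: (eqVneq v u1) => [->|_]; first by rewrite ?eqxx ?detour_neqF.
by case: (eqVneq v u2) => _; rewrite ?eqxx ?detour_neqF.
Qed.

Lemma detour_parent_eq_root v : (detour_parent v == r) = (v \notin [:: u1; u2]).
Proof.
by rewrite /detour_parent !inE; case: (v == u1); case: (v == u2); rewrite ?eqxx ?detour_neqF.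
Qed.

Lemma detour_parent_inj : {in [:: u1; u2] &, injective detour_parent}.
Proof.
move=> v w; rewrite !inE /detour_parent => /orP[]/eqP-> /orP[]/eqP->;
  by rewrite ?eqxx ?detour_neqF // => /eqP; rewrite detour_neqF.
Qed.

Section Coloring.

Variable rk : T -> 'I_m.+2.
Hypothesis rk_inj : {in [predC [:: r; u1; u2]] &, injective rk}.

(* u1 and u2 are only children, so each just has to avoid the colour of the
   edge above its parent. *)
Definition detour_color v :=
  let color1 w := if w == u1 then ord_other (rk q1) else rk w in
  if v == u2 then ord_other (color1 q2) else color1 v.

Lemma detour_color_parent v :
  detour_parent v != r -> detour_color v != detour_color (detour_parent v).
Proof.
rewrite /detour_color /detour_parent /=.
case: (eqVneq v u1) => [->|_]; first by rewrite ?eqxx ?detour_neqF ord_other_neq.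
by case: (eqVneq v u2) => _; rewrite ?eqxx ?detour_neqF ?ord_other_neq.
Qed.

Lemma detour_color_child v : v \notin [:: u1; u2] -> detour_color v = rk v.
Proof.
rewrite !inE negb_or => /andP[/negbTE v_u1 /negbTE v_u2].
by rewrite /detour_color /= v_u1 v_u2.
Qed.

Lemma detour_color_siblings v w : v != r -> w != r ->
  detour_parent v = detour_parent w -> v != w -> detour_color v != detour_color w.
Proof.
move=> vr wr pvw; apply: contra_neq.
have w_u := detour_parent_eq_root w; rewrite -pvw detour_parent_eq_root in w_u.
have [v_u|v_u] := boolP (v \in [:: u1; u2]).
  by move=> _; apply: detour_parent_inj; rewrite // -[_ \in _]negbK -w_u v_u.
rewrite !detour_color_child -?w_u // => /rk_inj; apply; rewrite inE in_cons negb_or.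
  by rewrite vr.
by rewrite wr -w_u.
Qed.

End Coloring.

Hypothesis cardT : #|T| = m.+4.+1.
Hypothesis e_sym : symmetric e.
Hypotheses (e_root : forall v, v != r -> e v r) (e_u1 : e u1 q1) (e_u2 : e u2 q2).

Lemma e_detour_parent v : v != r -> e v (detour_parent v).
Proof.
rewrite /detour_parent; case: ifP => [/eqP-> //|_].
by case: ifP => [/eqP-> //|_]; apply: e_root.
Qed.

Lemma card_detour_children : #|[predC [:: r; u1; u2]]| = m.+2.
Proof.
have /card_uniqP s_card : uniq [:: r; u1; u2] by rewrite /= !inE !detour_neqF.
by apply: (@addnI 3); rewrite [RHS]add3n -cardT -(cardC (mem [:: r; u1; u2])) s_card.
Qed.

Lemma px_le_two_detours k : px_le e k m.+2.
Proof.
have q1_child : q1 \in [predC [:: r; u1; u2]] by rewrite !inE !detour_neqF.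
have [rk rk_inj] := exists_rank_in q1_child card_detour_children.
exists (parent_coloring r detour_parent (detour_color rk)).
apply: (parent_tree_k_proper (d := detour_depth)) => //.
- exact: e_detour_parent.
- exact: detour_depth_parent.
- by move=> v w vr wr; apply: detour_color_siblings.
- by move=> v _; apply: detour_color_parent.
Qed.

End TwoDetours.

Lemma star_sym n (c : 'I_n) : symmetric (star c).
Proof. by move=> u v; rewrite /star eq_sym orbC. Qed.

Lemma add_edge_sym (T : finType) (e : rel T) a b :
  symmetric e -> symmetric (add_edge e a b).
Proof. by move=> e_sym u v; rewrite /add_edge e_sym eq_sym setUC. Qed.

Lemma add_edge_subrel (T : finType) (e : rel T) a b : subrel e (add_edge e a b).
Proof. by move=> u v; rewrite /add_edge => ->. Qed.

Lemma add_edge_new (T : finType) (e : rel T) a b : a != b -> add_edge e a b a b.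
Proof. by move=> ab; rewrite /add_edge ab eqxx orbT. Qed.

Lemma px_le_star_two_edges m k (T : finType) (e : rel T) (c a b x y : T) :
  #|T| = m.+4.+1 -> symmetric e -> (forall v, v != c -> e v c) -> e a b -> e x y ->
  a != c -> b != c -> x != c -> y != c -> a != b -> x != y -> [set x; y] != [set a; b] ->
  px_le e k m.+2.
Proof.
move=> cardT e_sym e_root e_ab e_xy ac bc xc yc ab xy xy_ab.
have e_ba : e b a by rewrite e_sym.
have e_yx : e y x by rewrite e_sym.
have [x_a|xa] := eqVneq x a.
  subst x; have yb : y != b by apply: contraNneq xy_ab => ->.
  by apply: (px_le_two_detours (r := c) (u1 := a) (q1 := b) (u2 := y) (q2 := a));
    rewrite // eq_sym.
have [x_b|xb] := eqVneq x b.
  subst x; have ya : y != a by apply: contraNneq xy_ab => ->; rewrite setUC.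
  by apply: (px_le_two_detours (r := c) (u1 := b) (q1 := a) (u2 := y) (q2 := b));
    rewrite // eq_sym.
have [y_a|ya] := eqVneq y a.
  subst y.
  by apply: (px_le_two_detours (r := c) (u1 := a) (q1 := b) (u2 := x) (q2 := a));
    rewrite // eq_sym.
have [y_b|yb] := eqVneq y b.
  subst y.
  by apply: (px_le_two_detours (r := c) (u1 := b) (q1 := a) (u2 := x) (q2 := b));
    rewrite // eq_sym.
by apply: (px_le_two_detours (r := c) (u1 := b) (q1 := a) (u2 := y) (q2 := x));
  rewrite // eq_sym.
Qed.

Theorem mainTheorem15 (n : nat) (c a b x y : 'I_n) (k : nat) :
  5 <= n ->
  a != c -> b != c -> a != b ->
  x != y -> ~~ add_edge (star c) a b x y ->
  3 <= k <= n ->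
  px_le (add_edge (add_edge (star c) a b) x y) k (n - 3).
Proof.
case: n c a b x y => [|[|[|[|[|m]]]]] // c a b x y _ ac bc ab xy xy_new _.
rewrite -[_ - 3]/m.+2.
rewrite /add_edge xy /= in xy_new; case/norP: xy_new => xy_star xy_ab.
have xc : x != c by apply: contraNneq xy_star => x_c; rewrite /star xy x_c eqxx.
have yc : y != c by apply: contraNneq xy_star => y_c; rewrite /star xy y_c eqxx orbT.
apply: (@px_le_star_two_edges m k _ _ c a b x y) => //.
- exact: card_ord.
- by do 2 apply: add_edge_sym; apply: star_sym.
- by move=> v vc; do 2 apply: add_edge_subrel; rewrite /star vc eqxx orbT.
- exact/add_edge_subrel/add_edge_new.
- exact: add_edge_new.
Qed.
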